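(* Let $I\subseteq \mathbb{K}[x_1,\dots,x_n]$ be a square-free monomial ideal which contains no variable. Assume that for some integer $s\geq 1$ the ideal $I^s$ has linear quotients with respect to (the restriction to $G(I^s)$ of) a monomial order. Then $I$ satisfies the strong gcd condition.
   Context: $G(I)$ denotes the set of minimal monomial generators of a monomial ideal $I$. A monomial ideal $I$ satisfies the strong gcd condition if there exists a linear order $\prec$ on $G(I)$ such that for any two monomials $u\prec v$ in $G(I)$ with $\gcd(u,v)=1$ there exists a monomial $w\in G(I)$ with $w\neq u,v$, $u\prec w$ and $w\mid uv$. A monomial order is a multiplicative total order on monomials with $1$ least. If $u_1\prec\dots\prec u_t$ is a linear order on $G(J)$, $J$ has linear quotients with respect to it if for every $2\leq i\leq t$ the ideal $(u_1,\dots,u_{i-1}):u_i$ is generated by a subset of the variables. *)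

(* Monomials in K[x_1..x_n] are modelled by exponent vectors;
   monomial ideals by the set (predicate) of monomials they contain. *)
From mathcomp Require Import all_boot.
Set Implicit Arguments. Unset Strict Implicit. Unset Printing Implicit Defensive.

Definition mon (n : nat) := {ffun 'I_n -> nat}.

Definition mulm n (u v : mon n) : mon n := [ffun i => u i + v i].
Definition onem n : mon n := [ffun _ => 0].
Definition varm n (k : 'I_n) : mon n := [ffun i => nat_of_bool (i == k)].
Definition gcdm n (u v : mon n) : mon n := [ffun i => minn (u i) (v i)].
Definition dvdm n (u v : mon n) : bool := [forall i, u i <= v i].
Definition prodm n (s : seq (mon n)) : mon n := foldr (@mulm n) (@onem n) s.
Definition squarefree_mon n (u : mon n) : Prop := forall i, u i <= 1.

Definition ideal_gen n (gs : seq (mon n)) : mon n -> Prop :=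
  fun m => exists2 g, g \in gs & dvdm g m.

Definition monomial_ideal n (I : mon n -> Prop) : Prop :=
  exists gs : seq (mon n), forall m, I m <-> ideal_gen gs m.

Definition mingens n (I : mon n -> Prop) (m : mon n) : Prop :=
  I m /\ forall d, I d -> dvdm d m -> d = m.

Definition ideal_pow n (I : mon n -> Prop) (s : nat) : mon n -> Prop :=
  fun m => exists gs : seq (mon n),
    [/\ size gs = s, (forall g, g \in gs -> I g) & dvdm (prodm gs) m].

Definition squarefree_ideal n (I : mon n -> Prop) : Prop :=
  forall m, mingens I m -> squarefree_mon m.

Definition monomial_order n (lt : rel (mon n)) : Prop :=
  [/\ (forall u, ~~ lt u u),
      (forall u v w, lt u v -> lt v w -> lt u w),
      (forall u v, u <> v -> lt u v \/ lt v u),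
      (forall u v w, lt u v -> lt (mulm u w) (mulm v w)) &
      (forall u, u <> onem n -> lt (onem n) u)].

(* monomials of the colon ideal (u_1,...,u_{i-1}) : u_i, where the u_j are
   the elements of G(J) preceding u = u_i *)
Definition colon_prev n (J : mon n -> Prop) (lt : rel (mon n)) (u : mon n)
  : mon n -> Prop :=
  fun m => exists v, [/\ mingens J v, lt v u & dvdm v (mulm m u)].

Definition gen_by_vars n (C : mon n -> Prop) : Prop :=
  exists S : {set 'I_n}, forall m, C m <-> exists2 k, k \in S & dvdm (varm k) m.

(* J has linear quotients w.r.t. the order lt restricted to G(J)
   (for the first generator the colon ideal is 0 = ideal of the empty set of variables) *)
Definition linear_quotients n (J : mon n -> Prop) (lt : rel (mon n)) : Prop :=
  forall u, mingens J u -> gen_by_vars (colon_prev J lt u).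

Definition strong_gcd n (I : mon n -> Prop) : Prop :=
  exists prec : rel (mon n),
    [/\ (forall u, mingens I u -> ~~ prec u u),
        (forall u v w, mingens I u -> mingens I v -> mingens I w ->
            prec u v -> prec v w -> prec u w),
        (forall u v, mingens I u -> mingens I v -> u <> v -> prec u v \/ prec v u) &
        (forall u v, mingens I u -> mingens I v -> prec u v -> gcdm u v = onem n ->
           exists w, [/\ mingens I w, w <> u, w <> v, prec u w & dvdm w (mulm u v)])].

From mathcomp Require Import all_boot.
From mathcomp Require Import zify.
From Stdlib Require Import Classical.
Set Implicit Arguments. Unset Strict Implicit. Unset Printing Implicit Defensive.

(* Order G(I) decreasingly with respect to the monomial order <.
   Let u, v in G(I) with v < u and gcd(u,v) = 1, and fix s >= 1.
   - Since I is square-free, u^s is a minimal generator of I^s, and every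
     minimal generator g of I dividing c*u^s already divides c*u.
   - The generator of I^s below v*u^(s-1) precedes u^s and divides v*u^s, so v
     lies in the colon ideal of u^s; by linear quotients some variable x_k
     dividing v lies in that colon ideal too.
   - A generator h < u^s of I^s with h | x_k*u^s is divisible by a product of
     s minimal generators of I; they cannot all be >= u (else h >= u^s), so
     one of them, w, satisfies w < u, and w | x_k*u | u*v.
   - w <> v, for otherwise v | x_k*u with gcd(u,v) = 1 forces v = x_k, and I
     contains no variable.  Hence w witnesses the strong gcd condition. *)

Section Monomials.
Variable n : nat.
Implicit Types u v d m a b c g : mon n.
Implicit Types gs : seq (mon n).

Definition powm u s := prodm (nseq s u).

Definition degm m := \sum_i m i.

Lemma mulmE u v i : mulm u v i = u i + v i. Proof. by rewrite ffunE. Qed.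

Lemma mulmC u v : mulm u v = mulm v u.
Proof. by apply/ffunP=> i; rewrite !ffunE addnC. Qed.

Lemma mul1m u : mulm (onem n) u = u.
Proof. by apply/ffunP=> i; rewrite !ffunE. Qed.

Lemma mulm1 u : mulm u (onem n) = u.
Proof. by apply/ffunP=> i; rewrite !ffunE addn0. Qed.

Lemma powmE u s i : powm u s i = s * u i.
Proof. by elim: s => [|s IH] /=; rewrite ffunE // IH mulSn. Qed.

Lemma powmS u s : powm u s.+1 = mulm u (powm u s). Proof. by []. Qed.

Lemma dvdmP u v : reflect (forall i, u i <= v i) (dvdm u v).
Proof. exact: forallP. Qed.

Lemma dvdm_refl u : dvdm u u. Proof. by apply/dvdmP. Qed.

Lemma dvdm_trans a b c : dvdm a b -> dvdm b c -> dvdm a c.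
Proof. by move=> /dvdmP ab /dvdmP bc; apply/dvdmP=> i; apply: leq_trans (ab i) (bc i). Qed.

Lemma dvdm_anti a b : dvdm a b -> dvdm b a -> a = b.
Proof. by move=> /dvdmP ab /dvdmP ba; apply/ffunP=> i; apply/eqP; rewrite eqn_leq ab ba. Qed.

Lemma dvdm_mul a b c d : dvdm a b -> dvdm c d -> dvdm (mulm a c) (mulm b d).
Proof. by move=> /dvdmP ab /dvdmP cd; apply/dvdmP=> i; rewrite !mulmE leq_add. Qed.

Lemma dvdm_prod g gs : g \in gs -> dvdm g (prodm gs).
Proof.
elim: gs => [|x gs IH] //; rewrite in_cons => /orP [/eqP ->|/IH /dvdmP gP].
  by apply/dvdmP=> i; rewrite mulmE leq_addr.
by apply/dvdmP=> i; rewrite mulmE (leq_trans (gP i)) ?leq_addl.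
Qed.

Lemma degm_lt d m : dvdm d m -> d <> m -> degm d < degm m.
Proof.
move=> /dvdmP dm ne; have [/existsP [i lt_i]|/existsPn ge] := boolP [exists i, d i < m i].
  rewrite /degm (bigD1 i) //= [X in _ < X](bigD1 i) //= -addSn.
  by rewrite leq_add // leq_sum.
by case: ne; apply/ffunP=> i; apply/eqP; rewrite eqn_leq dm leqNgt ge.
Qed.

Lemma mingens_below (I : mon n -> Prop) m : I m -> exists2 d, mingens I d & dvdm d m.
Proof.
move: {2}(degm m).+1 (ltnSn (degm m)) => N; elim: N m => // N IH m deg_m Im.
have [min_m|] := classic (forall d, I d -> dvdm d m -> d = m).
  by exists m => //; apply: dvdm_refl.
move=> /not_all_ex_not [d] not_min.
have [Id [dm ne]] : I d /\ dvdm d m /\ d <> m by tauto.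
have [e Me ed] := IH d (leq_trans (degm_lt dm ne) deg_m) Id.
by exists e => //; apply: dvdm_trans ed dm.
Qed.

Lemma ideal_pow_mingens (I : mon n -> Prop) s m : ideal_pow I s m ->
  exists gs, [/\ size gs = s, (forall g, g \in gs -> mingens I g) & dvdm (prodm gs) m].
Proof.
case=> gs [<- Igs prod_m]; elim: gs m Igs prod_m => [|g gs IH] m Igs prod_m.
  by exists [::].
have [d Md dg] := mingens_below (Igs g (mem_head _ _)).
have [|ds [size_ds Mds]] := IH (prodm gs) _ (dvdm_refl _).
  by move=> x xgs; apply: Igs; rewrite in_cons xgs orbT.
move=> ds_gs; exists (d :: ds); split; first by rewrite /= size_ds.
  by move=> x; rewrite in_cons => /orP [/eqP ->|/Mds].
exact: dvdm_trans (dvdm_mul dg ds_gs) prod_m.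
Qed.

Lemma squarefree_dvd_pow g c u s :
  squarefree_mon g -> dvdm g (mulm c (powm u s)) -> dvdm g (mulm c u).
Proof.
move=> sq_g /dvdmP gP; apply/dvdmP=> i; have := gP i; have := sq_g i.
by rewrite !mulmE powmE; case: (u i) => [|k]; rewrite ?muln0; lia.
Qed.

Lemma coprime_dvd_var u v k :
  gcdm u v = onem n -> dvdm (varm k) v -> dvdm v (mulm (varm k) u) -> v = varm k.
Proof.
move=> coprime /dvdmP kv /dvdmP vku; apply/ffunP=> i; apply/eqP.
have := kv i; have := vku i; have := congr1 (fun f : mon n => f i) coprime.
by rewrite /= !ffunE; lia.
Qed.

End Monomials.

Section SquarefreePowers.
Variables (n : nat) (I : mon n -> Prop).
Hypothesis sqI : squarefree_ideal I.

Lemma mingens_pow u s : mingens I u -> mingens (ideal_pow I s) (powm u s).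
Proof.
move=> Mu; split.
  exists (nseq s u); split; [exact: size_nseq | | exact: dvdm_refl].
  by move=> g /nseqP [-> _]; case: Mu.
move=> d /ideal_pow_mingens [gs [size_gs Mgs prod_d]] d_us.
have gs_u : gs = nseq s u.
  rewrite -size_gs; apply/all_pred1P/allP=> g ggs; apply/eqP.
  have [Ig _] := Mgs g ggs; apply: Mu.2 => //.
  rewrite -(mul1m u); apply: squarefree_dvd_pow (sqI (Mgs g ggs)) _; rewrite mul1m.
  exact: dvdm_trans (dvdm_prod ggs) (dvdm_trans prod_d d_us).
by apply: dvdm_anti d_us _; rewrite /powm -gs_u.
Qed.

End SquarefreePowers.

Section MonomialOrder.
Variables (n : nat) (lt : rel (mon n)).
Hypothesis ord : monomial_order lt.
Implicit Types u v w a b c d m g : mon n.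

Definition lem u v := u = v \/ lt u v.

Lemma ltm_irr u : ~~ lt u u. Proof. by case: ord. Qed.

Lemma ltm_trans u v w : lt u v -> lt v w -> lt u w.
Proof. by case: ord => _ tr _ _ _; apply: tr. Qed.

Lemma ltm_total u v : u <> v -> lt u v \/ lt v u.
Proof. by case: ord => _ _ tot _ _; apply: tot. Qed.

Lemma ltm_mulr u v w : lt u v -> lt (mulm u w) (mulm v w).
Proof. by case: ord => _ _ _ mul _; apply: mul. Qed.

Lemma ltm_mull u v w : lt u v -> lt (mulm w u) (mulm w v).
Proof. by rewrite !(mulmC w); apply: ltm_mulr. Qed.

Lemma lem_trans a b c : lem a b -> lem b c -> lem a c.
Proof. by case=> [->|ab] // [<-|bc]; right => //; apply: ltm_trans ab bc. Qed.

Lemma lem_ltm_trans a b c : lem a b -> lt b c -> lt a c.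
Proof. by case=> [->|ab] // bc; apply: ltm_trans ab bc. Qed.

Lemma lem_mul a b c d : lem a b -> lem c d -> lem (mulm a c) (mulm b d).
Proof.
move=> ab cd; apply: (@lem_trans _ (mulm b c)).
  by case: ab => [->|ab]; [left | right; apply: ltm_mulr].
by case: cd => [->|cd]; [left | right; apply: ltm_mull].
Qed.

(* Since 1 is least, a monomial order refines divisibility. *)
Lemma dvdm_lem d m : dvdm d m -> lem d m.
Proof.
move=> /dvdmP dm; pose e : mon n := [ffun i => m i - d i].
have -> : m = mulm d e by apply/ffunP=> i; rewrite mulmE ffunE subnKC.
have [->|ne] := eqVneq e (onem n); first by left; rewrite mulm1.
right; rewrite -[X in lt X _]mulm1; apply: ltm_mull.
by case: ord => _ _ _ _; apply; apply/eqP.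
Qed.

Lemma pow_lem_prod u gs : (forall g, g \in gs -> lem u g) ->
  lem (powm u (size gs)) (prodm gs).
Proof.
elim: gs => [|g gs IH] ug; first by left.
apply: lem_mul; first exact: ug (mem_head _ _).
by apply: IH => x xgs; apply: ug; rewrite in_cons xgs orbT.
Qed.

Lemma factor_below u gs : lt (prodm gs) (powm u (size gs)) -> exists2 w, w \in gs & lt w u.
Proof.
move=> prod_lt; apply: NNPP => no_below.
have u_le : forall g, g \in gs -> lem u g.
  move=> g ggs; have [->|ne] := eqVneq g u; first by left.
  have [gu|] := ltm_total (elimN eqP ne); last by right.
  by case: no_below; exists g.
have := lem_ltm_trans (pow_lem_prod u_le) prod_lt.
by rewrite (negbTE (ltm_irr _)).
Qed.

End MonomialOrder.

Section ColonIdealsOfPowers.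
Variables (n : nat) (I : mon n -> Prop) (lt : rel (mon n)).
Hypothesis sqI : squarefree_ideal I.
Hypothesis ord : monomial_order lt.
Implicit Types u v : mon n.

(* For s >= 1 and v < u in I, v lies in the colon ideal of u^s in I^s:
   the generator below v * u^(s-1) precedes u^s and divides v * u^s. *)
Lemma smaller_in_colon u v s : 0 < s -> I u -> I v -> lt v u ->
  colon_prev (ideal_pow I s) lt (powm u s) v.
Proof.
case: s => // s _ Iu Iv vu.
have vus_in : ideal_pow I s.+1 (mulm v (powm u s)).
  exists (v :: nseq s u); split; [by rewrite /= size_nseq | | exact: dvdm_refl].
  by move=> g; rewrite in_cons => /orP [/eqP -> | /nseqP [-> _]].
have [v' Mv' v'_vus] := mingens_below vus_in.
exists v'; split => //.
  by apply: (lem_ltm_trans ord (dvdm_lem ord v'_vus)); rewrite powmS; apply: ltm_mulr.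
apply: dvdm_trans v'_vus (dvdm_mul (dvdm_refl v) _).
by rewrite powmS; apply/dvdmP=> i; rewrite mulmE leq_addl.
Qed.

Lemma var_in_colon u s k : mingens I u ->
  colon_prev (ideal_pow I s) lt (powm u s) (varm k) ->
  exists w, [/\ mingens I w, lt w u & dvdm w (mulm (varm k) u)].
Proof.
move=> Mu [h [[Ih _] h_us h_kus]].
have [gs [size_gs Mgs prod_h]] := ideal_pow_mingens Ih.
have prod_us : lt (prodm gs) (powm u (size gs)).
  by rewrite size_gs; exact: (lem_ltm_trans ord (dvdm_lem ord prod_h) h_us).
have [w wgs wu] := factor_below ord prod_us.
exists w; split => //; first exact: Mgs.
apply: squarefree_dvd_pow (sqI (Mgs w wgs)) _.
exact: dvdm_trans (dvdm_prod wgs) (dvdm_trans prod_h h_kus).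
Qed.

End ColonIdealsOfPowers.

Theorem corollary2p8 (n : nat) (I : mon n -> Prop) (s : nat) (lt : rel (mon n)) :
  monomial_ideal I ->
  squarefree_ideal I ->
  (forall k : 'I_n, ~ I (varm k)) ->
  1 <= s ->
  monomial_order lt ->
  linear_quotients (ideal_pow I s) lt ->
  strong_gcd I.
Proof.
move=> _ sqI no_var s_gt0 ord lq.
exists (fun a b => lt b a); split.
- by move=> u _; exact: (ltm_irr ord u).
- by move=> u v w _ _ _ uv vw; exact: (ltm_trans ord vw uv).
- by move=> u v _ _ /(ltm_total ord) [|]; [right | left].
move=> u v Mu Mv vu coprime.
have [S colonE] := lq _ (mingens_pow sqI s Mu).
have [k kS kv] := (colonE v).1 (smaller_in_colon ord s_gt0 Mu.1 Mv.1 vu).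
have k_colon := (colonE (varm k)).2 (ex_intro2 _ _ k kS (dvdm_refl _)).
have [w [Mw wu w_ku]] := var_in_colon sqI ord Mu k_colon.
exists w; split => //.
- by move=> wE; move: wu; rewrite wE (negbTE (ltm_irr ord u)).
- move=> wE; apply: (no_var k); rewrite -(coprime_dvd_var coprime kv); first exact: Mv.1.
  by rewrite -wE.
- by rewrite mulmC; apply: dvdm_trans w_ku (dvdm_mul kv (dvdm_refl u)).
Qed.
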